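(* Let $\mathcal{P}_1,\mathcal{P}_2$ be finite posets such that $\mathcal{C}(\mathcal{P}_j)$ has $q_j$ extremal rays for $j=1,2$, and suppose $\mathcal{C}(\mathcal{P}_2)$ is simplicial. Then the maximum ND rank of matrices in $\mathcal{C}(\mathcal{P}_1)\otimes\mathcal{C}(\mathcal{P}_2)$ is $\min(q_1,q_2)$.
   Context: For a finite poset $\mathcal{Q}$, the order cone $\mathcal{C}(\mathcal{Q})\subset\mathbb{R}^{\mathcal{Q}}$ is the set of $\mathbf{f}$ with $f_x\ge0$ for all $x$ and $f_x\le f_y$ whenever $x\preceq y$; an extremal ray is a one-dimensional face, and a cone in $\mathbb{R}^p$ is simplicial if it is the conical hull of $p$ linearly independent vectors. $\mathcal{C}(\mathcal{P}_1)\otimes\mathcal{C}(\mathcal{P}_2)$ is the set of matrices $\sum_{i=1}^r\mathbf{a}_i\mathbf{b}_i^\intercal$ (finite $r$) with $\mathbf{a}_i\in\mathcal{C}(\mathcal{P}_1)$, $\mathbf{b}_i\in\mathcal{C}(\mathcal{P}_2)$; the ND rank of such a matrix is the minimal such $r$, and the maximum ND rank is the largest ND rank attained by such matrices. *)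

From HB Require Import structures.
From mathcomp Require Import all_boot all_order all_algebra.
From mathcomp Require Import reals.
Set Implicit Arguments. Unset Strict Implicit. Unset Printing Implicit Defensive.
Import Order.TTheory GRing.Theory Num.Theory.
Local Open Scope ring_scope.

Section Cones.
Variable R : realType.

Definition order_cone (d : Order.disp_t) (Q : finPOrderType d) (f : Q -> R) : Prop :=
  (forall x, 0 <= f x) /\ (forall x y : Q, (x <= y)%O -> f x <= f y).

Variable T : finType.

Definition vadd (f g : T -> R) : T -> R := fun x => f x + g x.
Definition vscale (t : R) (f : T -> R) : T -> R := fun x => t * f x.
Definition vzero : T -> R := fun _ => 0.

Definition is_face (K F : (T -> R) -> Prop) : Prop :=
  (forall x, F x -> K x) /\
  F vzero /\
  (forall x y, F x -> F y -> F (vadd x y)) /\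
  (forall t x, 0 <= t -> F x -> F (vscale t x)) /\
  (forall x y, K x -> K y -> F (vadd x y) -> F x /\ F y).

Definition one_dimensional (F : (T -> R) -> Prop) : Prop :=
  exists v, v <> vzero /\ (forall x, F x -> exists t, x = vscale t v) /\
            (exists x, F x /\ x <> vzero).

Definition extremal_ray (K F : (T -> R) -> Prop) : Prop :=
  is_face K F /\ one_dimensional F.

Definition num_extremal_rays (K : (T -> R) -> Prop) (q : nat) : Prop :=
  exists Fs : 'I_q -> ((T -> R) -> Prop),
    injective Fs /\ (forall i, extremal_ray K (Fs i)) /\
    (forall F, extremal_ray K F -> exists i, F = Fs i).

Definition simplicial (K : (T -> R) -> Prop) : Prop :=
  exists v : T -> (T -> R),
    (forall c : T -> R, (forall x, \sum_(i : T) c i * v i x = 0) -> forall i, c i = 0) /\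
    (forall f, K f <-> exists c : T -> R, (forall i, 0 <= c i) /\
                         forall x, f x = \sum_(i : T) c i * v i x).

End Cones.

Section Tensor.
Variable R : realType.
Variables (d1 d2 : Order.disp_t) (P1 : finPOrderType d1) (P2 : finPOrderType d2).

Definition nd_decomp (M : P1 -> P2 -> R) (r : nat) : Prop :=
  exists (a : 'I_r -> P1 -> R) (b : 'I_r -> P2 -> R),
    (forall i, order_cone (a i)) /\ (forall i, order_cone (b i)) /\
    forall x y, M x y = \sum_(i < r) a i x * b i y.

Definition in_tensor_cone (M : P1 -> P2 -> R) : Prop := exists r, nd_decomp M r.

Definition nd_rank_is (M : P1 -> P2 -> R) (k : nat) : Prop :=
  nd_decomp M k /\ forall r, nd_decomp M r -> (k <= r)%N.

Definition max_nd_rank_is (m : nat) : Prop :=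
  (exists M, in_tensor_cone M /\ nd_rank_is M m) /\
  (forall M k, in_tensor_cone M -> nd_rank_is M k -> (k <= m)%N).

End Tensor.

(* Upper bound: an order cone is generated by its extremal rays.  For nonzero
   f in C(P), take an up-set U inside the support of f, minimal among those
   across whose lower boundary f increases strictly.  Any splitting of the
   indicator of U inside C(P) is constant on U, so 1_U spans an extremal ray,
   and subtracting the largest multiple of 1_U that stays in C(P) lowers the
   number of nonzero values plus strict increases of f.  Hence every ND
   decomposition regroups into q1 terms on the left, or q2 on the right.

   Lower bound: every extremal ray of the simplicial cone C(P2) contains a basis
   vector, so q2 <= |P2|.  Pair generators w_k of m = min(q1, q2) distinct
   extremal rays of C(P1) with distinct basis vectors v_s(k) of C(P2).  Expanding
   any decomposition sum_i a_i b_i^T of M = sum_k w_k v_s(k)^T in the basis gives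
   w_k = sum_i c_(i,s(k)) a_i with c >= 0; as w_k spans a face, some a_i lies on
   the ray of w_k, and distinct rays need distinct a_i. *)

From mathcomp Require Import all_boot all_order all_algebra reals boolp ring.
Set Implicit Arguments. Unset Strict Implicit. Unset Printing Implicit Defensive.
Import Order.TTheory GRing.Theory Num.Theory.
Local Open Scope ring_scope.

Definition nonneg_comb (R : realType) (T I : finType) (a : I -> T -> R) (f : T -> R) :=
  exists l : I -> R, (forall i, 0 <= l i) /\ forall x, f x = \sum_i l i * a i x.

Lemma nonneg_comb_add_scale (R : realType) (T I : finType) (a : I -> T -> R) f c i :
  nonneg_comb a f -> 0 <= c -> nonneg_comb a (fun x => f x + c * a i x).
Proof.
move=> [l [l0 fE]] c0; exists (fun j => l j + (j == i)%:R * c); split.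
  by move=> j; rewrite addr_ge0 ?mulr_ge0 ?ler0n.
move=> x; rewrite fE; under [RHS]eq_bigr do rewrite mulrDl.
rewrite big_split /=; congr (_ + _).
by rewrite (bigD1 i) //= eqxx mul1r big1 ?addr0 // => j /negbTE ->; rewrite !mul0r.
Qed.

Lemma nonneg_comb_sub (R : realType) (T I : finType) (a : I -> T -> R) (p : pred I) c :
  (forall i, 0 <= c i) -> nonneg_comb a (fun x => \sum_(i | p i) c i * a i x).
Proof.
move=> c0; exists (fun i => (p i)%:R * c i); split=> [i | x]; first by rewrite mulr_ge0 ?ler0n.
by rewrite big_mkcond; apply: eq_bigr => i _; case: (p i); rewrite ?mul1r ?mul0r.
Qed.

Lemma free_coef_eq (R : realType) (T J : finType) (v : J -> T -> R) (c c' : J -> R) :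
  (forall e : J -> R, (forall y, \sum_j e j * v j y = 0) -> forall j, e j = 0) ->
  (forall y, \sum_j c j * v j y = \sum_j c' j * v j y) -> forall j, c j = c' j.
Proof.
move=> v_free cE j; apply/eqP; rewrite -subr_eq0; apply/eqP.
apply: (v_free (fun j => c j - c' j)) => y.
by under eq_bigr do rewrite mulrBl; rewrite sumrB cE subrr.
Qed.

Section ConeFaces.
Variables (R : realType) (T : finType) (K : (T -> R) -> Prop).
Hypothesis K_ge0 : forall f x, K f -> 0 <= f x.
Hypothesis K_comb : forall (I : finType) (a : I -> T -> R) f,
  (forall i, K (a i)) -> nonneg_comb a f -> K f.

Lemma neq_vzero (f : T -> R) : f <> @vzero R T -> exists x, f x != 0.
Proof.
move=> f0; apply: contra_notP f0 => nf; apply: funext => x.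
by apply/eqP; apply: contra_notT nf => ?; exists x.
Qed.

Lemma extremal_ray_witness F : extremal_ray K F -> exists w, F w /\ w <> @vzero R T.
Proof. by case=> _ [_ [_ [_ [w []]]]]; exists w. Qed.

Lemma extremal_ray_ratio F x u :
  extremal_ray K F -> F x -> F u -> u <> @vzero R T -> exists2 l, 0 <= l & x = vscale l u.
Proof.
move=> [[FK _] [v [_ [Fv _]]]] Fx Fu /neq_vzero [p up].
have [s xs] := Fv _ Fx; have [s' us] := Fv _ Fu.
have up_gt0 : 0 < u p by rewrite lt0r up /=; exact: K_ge0 (FK _ Fu).
exists (x p / u p); first exact: divr_ge0 (K_ge0 _ (FK _ Fx)) (ltW up_gt0).
have [s'0 vp0] : s' != 0 /\ v p != 0.
  by apply/andP; rewrite -negb_or -mulf_eq0 -/(vscale s' v p) -us.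
by apply: funext => z; rewrite xs us /vscale; field; rewrite s'0 vp0.
Qed.

Lemma extremal_ray_eq F1 F2 u : extremal_ray K F1 -> extremal_ray K F2 ->
  F1 u -> F2 u -> u <> @vzero R T -> F1 = F2.
Proof.
suff sub G1 G2 : extremal_ray K G1 -> extremal_ray K G2 ->
    G1 u -> G2 u -> u <> @vzero R T -> forall x, G1 x -> G2 x.
  by move=> *; apply: funext => x; apply: propext; split; apply: sub.
move=> EG1 [[_ [_ [_ [G2scale _]]]] _] G1u G2u u0 x G1x.
by have [l l0 ->] := extremal_ray_ratio EG1 G1x G1u u0; apply: G2scale.
Qed.

Lemma face_nonneg_comb F (I : finType) (a : I -> T -> R) (c : I -> R) i :
  is_face K F -> (forall j, 0 <= c j) -> (forall j, K (a j)) ->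
  F (fun x => \sum_j c j * a j x) -> c i != 0 -> F (a i).
Proof.
move=> [_ [_ [_ [Fscale Fsplit]]]] c0 Ka Fsum ci0.
have [Fci _] : F (fun x => \sum_(j | j == i) c j * a j x) /\
               F (fun x => \sum_(j | j != i) c j * a j x).
  apply: Fsplit; try exact: K_comb Ka (nonneg_comb_sub _ _ c0).
  by move: Fsum; under eq_fun => x do rewrite (bigID (pred1 i)) /=.
have -> : a i = vscale (c i)^-1 (fun x => \sum_(j | j == i) c j * a j x).
  by apply: funext => x; rewrite /vscale big_pred1_eq mulrA mulVf ?mul1r.
by apply: Fscale; rewrite // invr_ge0.
Qed.

Lemma extremal_rays_le_generators m (F : 'I_m -> (T -> R) -> Prop) (w : 'I_m -> T -> R)
    (I : finType) (a : I -> T -> R) :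
  injective F -> (forall k, extremal_ray K (F k)) ->
  (forall k, F k (w k)) -> (forall k, w k <> @vzero R T) ->
  (forall i, K (a i)) -> (forall k, nonneg_comb a (w k)) -> (m <= #|I|)%N.
Proof.
move=> Finj Fray Fw w0 Ka wa.
have ray_gen k : exists i, F k (a i) /\ a i <> @vzero R T.
  have [l [l0 wE]] := wa k; have [x wx0] := neq_vzero (w0 k).
  have /existsP [i li0] : [exists i, l i * a i x != 0].
    rewrite -negb_forall; apply: contra wx0 => /forallP nz.
    by rewrite wE big1 // => i _; apply/eqP/nz.
  exists i; split; last by move=> ai0; move: li0; rewrite ai0 /vzero mulr0 eqxx.
  apply: (@face_nonneg_comb (F k) _ a l i) => //; first by case: (Fray k).
    by have <- : w k = fun x => \sum_j l j * a j x by apply: funext.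
  by move: li0; rewrite mulf_eq0 negb_or => /andP [].
have [tau tau_ray] := boolp.choice ray_gen.
suff /leq_card : injective tau by rewrite card_ord.
move=> k k' eq_tau; apply: Finj; have [Fk a0] := tau_ray k.
apply: (extremal_ray_eq (Fray k) (Fray k') Fk _ a0).
by rewrite eq_tau; case: (tau_ray k').
Qed.

Lemma simplicial_generator_in (v : T -> T -> R) :
  (forall f, K f <-> nonneg_comb v f) -> forall j, K (v j).
Proof.
move=> Kv j; have -> : v j = fun x => \sum_(i | i == j) 1 * v i x.
  by apply: funext => x; rewrite big_pred1_eq mul1r.
by apply/Kv/nonneg_comb_sub => i; rewrite ler01.
Qed.

Lemma simplicial_extremal_rays_le_card q :
  simplicial K -> num_extremal_rays K q -> (q <= #|T|)%N.
Proof.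
move=> [v [_ Kv]] [F [Finj [Fray _]]].
have [w Fw] := boolp.choice (fun k => extremal_ray_witness (Fray k)).
have Kw k : K (w k) by case: (Fray k) => [[FK _] _]; apply/FK/(proj1 (Fw k)).
apply: (extremal_rays_le_generators Finj Fray (fun k => proj1 (Fw k)) (fun k => proj2 (Fw k))).
  exact: simplicial_generator_in Kv.
by move=> k; apply/Kv/Kw.
Qed.

End ConeFaces.

Section OrderCone.
Variables (R : realType) (d : Order.disp_t) (P : finPOrderType d).
Implicit Types (f g : P -> R) (U V : {set P}).

Lemma order_cone_ge0 f x : order_cone f -> 0 <= f x.
Proof. by case. Qed.

Lemma order_cone_comb (I : finType) (a : I -> P -> R) f :
  (forall i, order_cone (a i)) -> nonneg_comb a f -> order_cone f.
Proof.
move=> Ka [l [l0 fE]]; split=> [x | x y xy]; rewrite !fE.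
  by apply: sumr_ge0 => i _; rewrite mulr_ge0 //; case: (Ka i).
by apply: ler_sum => i _; rewrite ler_wpM2l //; case: (Ka i) => _ ->.
Qed.

Definition indicator U : P -> R := fun x => (x \in U)%:R.

Definition indicator_ray U : (P -> R) -> Prop :=
  fun g => exists2 t, 0 <= t & g = vscale t (indicator U).

Definition jump_upset f U : Prop :=
  [/\ U != set0, {in U, forall x, f x != 0},
      forall x y, (x <= y)%O -> x \in U -> y \in U &
      forall x y, (x <= y)%O -> y \in U -> x \notin U -> f x < f y].

Definition minimal_jump_upset f U : Prop :=
  jump_upset f U /\ forall V, jump_upset f V -> V \subset U -> V = U.

Lemma minimal_jump_upset_exists f :
  order_cone f -> f <> @vzero R P -> exists U, minimal_jump_upset f U.
Proof.
move=> [f0 fmono] /neq_vzero [x0 fx0].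
have supp : jump_upset f [set x | f x != 0].
  split=> [|x|x y xy|x y xy]; rewrite ?inE //.
  - by apply/set0Pn; exists x0; rewrite inE.
  - by move=> fx; rewrite gt_eqF // (lt_le_trans _ (fmono _ _ xy)) // lt0r fx f0.
  - by rewrite negbK => fy /eqP ->; rewrite lt0r fy f0.
have [U /minsetP [/asboolP jU minU] _] :=
  minset_exists (P := fun U => `[< jump_upset f U >]) (asboolT supp).
by exists U; split => // V /asboolP; apply: minU.
Qed.

Lemma indicator_cone U :
  (forall x y, (x <= y)%O -> x \in U -> y \in U) -> order_cone (indicator U).
Proof.
move=> Uup; split=> [x | x y xy]; rewrite /indicator ?ler0n //.
by case: (boolP (x \in U)) => [/(Uup _ _ xy) -> | _]; rewrite ?ler0n.
Qed.

Lemma minimal_jump_upset_summand f U x y t :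
  minimal_jump_upset f U -> order_cone x -> order_cone y ->
  (forall z, x z + y z = t * indicator U z) -> indicator_ray U x.
Proof.
move=> [[U0 Usupp Uup Ujump] minU] [x0 xmono] [y0 ymono] xyE.
have x_out z : z \notin U -> x z = 0.
  move=> zU; have /eqP := xyE z; rewrite /indicator (negbTE zU) mulr0.
  by rewrite paddr_eq0 // => /andP [/eqP].
have x_up a b : (a <= b)%O -> a \in U -> x a = x b.
  move=> ab aU; have bU := Uup _ _ ab aU.
  have : x a + y a = x b + y b by rewrite !xyE /indicator aU bU.
  move: (xmono _ _ ab) (ymono _ _ ab); rewrite le_eqVlt => /orP [/eqP // | xlt] yle.
  by move=> E; have := ltr_leD xlt yle; rewrite E ltxx.
have [u0 u0U] := set0Pn _ U0.
pose V := [set z in U | x z == x u0].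
have VU : V \subset U by apply/subsetP => z; rewrite inE => /andP [].
have VeU : V = U.
  apply: (minU _ _ VU); split.
  - by apply/set0Pn; exists u0; rewrite inE u0U eqxx.
  - by move=> z /(subsetP VU) /Usupp.
  - move=> a b ab; rewrite !inE => /andP [aU /eqP <-].
    by rewrite (Uup _ _ ab aU) (x_up _ _ ab aU) eqxx.
  - move=> a b ab; rewrite !inE => /andP [bU /eqP bx].
    case aU: (a \in U) => /=; last by move=> _; apply: Ujump ab bU _; rewrite aU.
    by rewrite (x_up _ _ ab aU) bx eqxx.
exists (x u0) => //; apply: funext => z; rewrite /vscale /indicator.
case: (boolP (z \in U)) => [| zU]; last by rewrite mulr0 x_out.
by rewrite -{1}VeU inE mulr1 => /andP [_ /eqP].
Qed.

Lemma indicator_ray_extremal f U :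
  minimal_jump_upset f U -> extremal_ray (@order_cone R d P) (indicator_ray U).
Proof.
move=> minU; have [[U0 _ Uup _] _] := minU; have [u0 u0U] := set0Pn _ U0.
have [_ indmono] := indicator_cone Uup.
have ind_neq0 : indicator U <> @vzero R P.
  by move=> /(congr1 (fun g => g u0)) /eqP; rewrite /indicator /vzero u0U oner_eq0.
split; last first.
  exists (indicator U); split=> //; split=> [g [t _ ->] | ]; first by exists t.
  exists (indicator U); split=> //; exists 1; rewrite // /vscale.
  by apply: funext => z; rewrite mul1r.
split; [|split; [|split; [|split]]].
- by move=> g [t t0 ->]; split=> [x | x y xy]; rewrite /vscale ?mulr_ge0 ?ler_wpM2l ?indmono.
- by exists 0; rewrite // /vscale; apply: funext => z; rewrite mul0r.
- move=> g h [t t0 ->] [s s0 ->]; exists (t + s); first exact: addr_ge0.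
  by rewrite /vadd /vscale; apply: funext => z; rewrite mulrDl.
- move=> s g s0 [t t0 ->]; exists (s * t); first exact: mulr_ge0.
  by rewrite /vscale; apply: funext => z; rewrite mulrA.
- move=> x y Kx Ky [t _ xyE]; have xyE' z := congr1 (fun g => g z) xyE.
  split; [apply: (minimal_jump_upset_summand minU Kx Ky) => z |
          apply: (minimal_jump_upset_summand minU Ky Kx) => z; rewrite addrC]; exact: xyE'.
Qed.

Definition peel f U t : P -> R := fun x => f x - t * indicator U x.

Definition jump_measure f : nat :=
  #|[set x | f x != 0]| + #|[set p : P * P | (p.1 <= p.2)%O && (f p.1 != f p.2)]|.

(* [(None, b)] stands for the step from the value [0] up to [b \in U]. *)
Definition boundary_step U (p : option P * P) : bool :=
  (p.2 \in U) && (if p.1 is Some a then (a <= p.2)%O && (a \notin U) else true).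

Definition step_rise f (p : option P * P) : R :=
  f p.2 - (if p.1 is Some a then f a else 0).

Lemma step_rise_gt0 f U p : jump_upset f U -> order_cone f ->
  boundary_step U p -> 0 < step_rise f p.
Proof.
move=> [_ Usupp _ Ujump] [f0 _]; case: p => [[a|] b] /andP [/= bU]; rewrite /step_rise /=.
  by move=> /andP [ab aU]; rewrite subr_gt0 Ujump.
by move=> _; rewrite subr0 lt0r Usupp // f0.
Qed.

Lemma peel_cone f U t : order_cone f -> jump_upset f U ->
  (forall p, boundary_step U p -> t <= step_rise f p) ->
  order_cone (peel f U t).
Proof.
move=> [f0 fmono] [_ _ Uup _] t_le; split=> [x | a b ab]; rewrite /peel /indicator.
  case: (boolP (x \in U)) => xU; last by rewrite mulr0 subr0.
  by have := t_le (None, x); rewrite /boundary_step /step_rise /= xU subr0 mulr1 subr_ge0; apply.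
case: (boolP (a \in U)) => aU; first by rewrite (Uup _ _ ab aU) lerD2r fmono.
rewrite mulr0 subr0; case: (boolP (b \in U)) => bU; last by rewrite mulr0 subr0 fmono.
have := t_le (Some a, b); rewrite /boundary_step /step_rise /= ab aU bU mulr1.
by rewrite lerBrDr addrC -lerBrDr; apply.
Qed.

Lemma peel_measure f U t p : jump_upset f U -> boundary_step U p -> step_rise f p = t ->
  (jump_measure (peel f U t) < jump_measure f)%N.
Proof.
move=> [_ Usupp Uup Ujump] Up pt; set g := peel f U t.
have supp_sub : [set x | g x != 0] \subset [set x | f x != 0].
  apply/subsetP => x; rewrite !inE /g /peel /indicator; apply: contraNneq => fx.
  case: (boolP (x \in U)) => xU; last by rewrite fx mulr0 subr0.
  by move: (Usupp _ xU); rewrite fx eqxx.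
have jumps_sub : [set p : P * P | (p.1 <= p.2)%O && (g p.1 != g p.2)] \subset
                 [set p : P * P | (p.1 <= p.2)%O && (f p.1 != f p.2)].
  apply/subsetP => -[a b]; rewrite !inE /= /g /peel /indicator => /andP [ab].
  rewrite ab /=; apply: contraNneq => fab.
  case: (boolP (a \in U)) => aU; first by rewrite (Uup _ _ ab aU) fab.
  case: (boolP (b \in U)) => bU; last by rewrite fab.
  by have := Ujump _ _ ab bU aU; rewrite fab ltxx.
rewrite /jump_measure; move: Up pt; case: p => [[a|] b] /andP [/= bU].
  move=> /andP [ab aU] pt; rewrite -addnS leq_add ?subset_leq_card //.
  apply: proper_card; apply/properP; split => //; exists (a, b); rewrite !inE /= ab /=.
    by rewrite lt_eqF // Ujump.
  rewrite /g /peel /indicator negbK (negbTE aU) bU -pt /step_rise /= mulr0 mulr1 subr0.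
  by rewrite opprB addrC subrK eqxx.
move=> _ pt; rewrite -addSn leq_add ?subset_leq_card //.
apply: proper_card; apply/properP; split => //; exists b; rewrite !inE ?Usupp //.
by rewrite /g /peel /indicator negbK bU mulr1 -pt /step_rise /= subr0 subrr eqxx.
Qed.

Lemma jump_upset_peel f U : order_cone f -> jump_upset f U ->
  exists2 t, 0 < t & order_cone (fun x => f x - t * indicator U x) /\
    (jump_measure (peel f U t) < jump_measure f)%N.
Proof.
move=> Kf jU; have [U0 _ _ _] := jU; have [u0 u0U] := set0Pn _ U0.
have step0 : boundary_step U (None, u0) by rewrite /boundary_step /= u0U.
case: (arg_minP (step_rise f) step0) => p Up p_min.
exists (step_rise f p); first exact: step_rise_gt0 jU Kf Up.
by split; [apply: peel_cone | apply: peel_measure Up _].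
Qed.

Lemma order_cone_extremal_nonneg_comb q (F : 'I_q -> (P -> R) -> Prop) (w : 'I_q -> P -> R) :
  (forall G, extremal_ray (@order_cone R d P) G -> exists k, G = F k) ->
  (forall k, extremal_ray (@order_cone R d P) (F k)) ->
  (forall k, F k (w k)) -> (forall k, w k <> @vzero R P) ->
  forall f, order_cone f -> nonneg_comb w f.
Proof.
move=> Fall Fray Fw w0 f; have [n] := ubnP (jump_measure f).
elim: n f => // n IH f; rewrite ltnS => f_n Kf.
have [->|f0] := pselect (f = @vzero R P).
  by exists (fun=> 0); split=> // x; rewrite big1 // => k _; rewrite mul0r.
have [U minU] := minimal_jump_upset_exists Kf f0.
have [k Uk] := Fall _ (indicator_ray_extremal minU).
have [c c0 indE] : exists2 c, 0 <= c & indicator U = vscale c (w k).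
  apply: (extremal_ray_ratio (@order_cone_ge0) (Fray k) _ (Fw k) (w0 k)).
  by rewrite -Uk; exists 1; rewrite // /vscale; apply: funext => x; rewrite mul1r.
have [t t0 [Kg g_lt]] := jump_upset_peel Kf minU.1.
have -> : f = fun x => peel f U t x + t * c * w k x.
  by apply: funext => x; rewrite /peel indE /vscale mulrA subrK.
apply: nonneg_comb_add_scale; last exact: mulr_ge0 (ltW t0) c0.
exact: IH (leq_trans g_lt f_n) Kg.
Qed.

Lemma num_extremal_rays_nonneg_comb q : num_extremal_rays (@order_cone R d P) q ->
  exists w : 'I_q -> P -> R,
    (forall k, order_cone (w k)) /\ forall f, order_cone f -> nonneg_comb w f.
Proof.
move=> [F [_ [Fray Fall]]].
have [w Fw] := boolp.choice (fun k => extremal_ray_witness (Fray k)).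
exists w; split; first by move=> k; case: (Fray k) => [[FK _] _]; apply/FK/(proj1 (Fw k)).
exact: order_cone_extremal_nonneg_comb Fall Fray (fun k => proj1 (Fw k)) (fun k => proj2 (Fw k)).
Qed.

End OrderCone.

Section NDRank.
Variable R : realType.

Lemma nd_decomp_transpose d1 d2 (P1 : finPOrderType d1) (P2 : finPOrderType d2)
    (M : P1 -> P2 -> R) r :
  nd_decomp M r -> nd_decomp (fun y x => M x y) r.
Proof.
move=> [a [b [Ka [Kb ME]]]]; exists b, a; split=> //; split=> // y x.
by rewrite ME; apply: eq_bigr => i _; rewrite mulrC.
Qed.

Lemma nd_decomp_rays_left d1 d2 (P1 : finPOrderType d1) (P2 : finPOrderType d2) q
    (M : P1 -> P2 -> R) r :
  num_extremal_rays (@order_cone R d1 P1) q -> nd_decomp M r -> nd_decomp M q.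
Proof.
move=> /num_extremal_rays_nonneg_comb [w [Kw wgen]] [a [b [Ka [Kb ME]]]].
have [l la] := boolp.choice (fun i => wgen _ (Ka i)).
exists w, (fun k y => \sum_i l i k * b i y); split=> //; split.
  by move=> k; apply: (order_cone_comb Kb); exists (fun i => l i k); split=> // i; case: (la i).
move=> x y; rewrite ME; under eq_bigr => i _ do rewrite (proj2 (la i) x) mulr_suml.
rewrite exchange_big /=; apply: eq_bigr => k _; rewrite mulr_sumr.
by apply: eq_bigr => i _; rewrite mulrCA mulrA.
Qed.

Lemma nd_decomp_rays_right d1 d2 (P1 : finPOrderType d1) (P2 : finPOrderType d2) q
    (M : P1 -> P2 -> R) r :
  num_extremal_rays (@order_cone R d2 P2) q -> nd_decomp M r -> nd_decomp M q.
Proof.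
by move=> rays /nd_decomp_transpose /(nd_decomp_rays_left rays) /nd_decomp_transpose.
Qed.

End NDRank.

Section DiagonalTensor.
Variables (R : realType) (d1 d2 : Order.disp_t).
Variables (P1 : finPOrderType d1) (P2 : finPOrderType d2) (m : nat).
Variables (F : 'I_m -> (P1 -> R) -> Prop) (w : 'I_m -> P1 -> R).
Variables (v : P2 -> P2 -> R) (sigma : 'I_m -> P2).
Hypothesis F_inj : injective F.
Hypothesis F_ray : forall k, extremal_ray (@order_cone R d1 P1) (F k).
Hypothesis F_w : forall k, F k (w k).
Hypothesis w_neq0 : forall k, w k <> @vzero R P1.
Hypothesis v_free : forall c : P2 -> R, (forall y, \sum_j c j * v j y = 0) -> forall j, c j = 0.
Hypothesis v_span : forall f, order_cone f <-> nonneg_comb v f.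
Hypothesis sigma_inj : injective sigma.

Let M x y := \sum_k w k x * v (sigma k) y.

Lemma diag_tensor_decomp_coef r (a : 'I_r -> P1 -> R) (b c : 'I_r -> P2 -> R) :
  (forall x y, M x y = \sum_i a i x * b i y) -> (forall i y, b i y = \sum_j c i j * v j y) ->
  forall k x, w k x = \sum_i c i (sigma k) * a i x.
Proof.
move=> ME bE k x.
pose e j := \sum_(k' | sigma k' == j) w k' x.
have e_sigma : e (sigma k) = w k x.
  by rewrite /e (big_pred1 k) // => k'; rewrite (inj_eq sigma_inj).
rewrite -e_sigma (@free_coef_eq _ _ _ v e (fun j => \sum_i a i x * c i j) v_free).
  by apply: eq_bigr => i _; rewrite mulrC.
move=> y; transitivity (M x y).
  rewrite /M (partition_big sigma predT) //=; apply: eq_bigr => j _.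
  by rewrite mulr_suml; apply: eq_bigr => k' /eqP <-.
rewrite ME; under eq_bigr => i _ do rewrite bE mulr_sumr.
rewrite exchange_big /=; apply: eq_bigr => j _; rewrite mulr_suml.
by apply: eq_bigr => i _; rewrite mulrA.
Qed.

Lemma diag_tensor_nd_rank : nd_rank_is M m.
Proof.
split.
  exists w, (fun k => v (sigma k)); split.
    by move=> k; case: (F_ray k) => [[FK _] _]; apply: FK.
  by split=> // k; apply: simplicial_generator_in v_span (sigma k).
move=> r [a [b [Ka [Kb ME]]]]; have [c cb] := boolp.choice (fun i => (v_span (b i)).1 (Kb i)).
rewrite -[r]card_ord; apply: (extremal_rays_le_generators (@order_cone_ge0 R d1 P1)
  (@order_cone_comb R d1 P1) F_inj F_ray F_w w_neq0 Ka) => k.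
exists (fun i => c i (sigma k)); split=> [i | x]; first by case: (cb i).
by apply: (diag_tensor_decomp_coef ME) => i y; case: (cb i).
Qed.

End DiagonalTensor.

Lemma nd_rank_attained (R : realType) d1 d2 (P1 : finPOrderType d1) (P2 : finPOrderType d2)
    q m :
  num_extremal_rays (@order_cone R d1 P1) q -> simplicial (@order_cone R d2 P2) ->
  (m <= q)%N -> (m <= #|P2|)%N ->
  exists M : P1 -> P2 -> R, in_tensor_cone M /\ nd_rank_is M m.
Proof.
move=> [F [F_inj [F_ray _]]] [v [v_free v_span]] m_q m_P2.
have [w Fw] := boolp.choice (fun k => extremal_ray_witness (F_ray k)).
have widen_inj n n' (h : (n <= n')%N) : injective (widen_ord h).
  by move=> i j /(congr1 val) /= /ord_inj.
have M_rank := diag_tensor_nd_rank (F := F \o widen_ord m_q) (w := w \o widen_ord m_q)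
  (sigma := enum_val \o widen_ord m_P2) (inj_comp F_inj (widen_inj _ _ m_q))
  (fun k => F_ray _) (fun k => proj1 (Fw _)) (fun k => proj2 (Fw _)) v_free v_span
  (inj_comp (@enum_val_inj _ _) (widen_inj _ _ m_P2)).
by eexists; split; [exists m; case: M_rank | exact: M_rank].
Qed.

Theorem theorem6 (R : realType) (d1 d2 : Order.disp_t)
  (P1 : finPOrderType d1) (P2 : finPOrderType d2) (q1 q2 : nat) :
  num_extremal_rays (@order_cone R d1 P1) q1 ->
  num_extremal_rays (@order_cone R d2 P2) q2 ->
  simplicial (@order_cone R d2 P2) ->
  max_nd_rank_is R P1 P2 (minn q1 q2).
Proof.
move=> rays1 rays2 simp; split.
  have q2_le := simplicial_extremal_rays_le_card (@order_cone_ge0 R d2 P2)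
    (@order_cone_comb R d2 P2) simp rays2.
  exact: nd_rank_attained rays1 simp (geq_minl _ _) (leq_trans (geq_minr _ _) q2_le).
move=> M k [r Mr] [_ k_min]; rewrite leq_min; apply/andP; split; apply: k_min.
  exact: nd_decomp_rays_left rays1 Mr.
exact: nd_decomp_rays_right rays2 Mr.
Qed.
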